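(* Let $(X,d)$ be a separable metric space, let $T\colon X\to X$ be a Borel measurable map, and let $\mu,\nu$ be $T$-invariant Borel probability measures on $X$. Let $(s_n)_{n\ge1}$ be a two-jumpy scale sequence. Define \[\phi(x,y)=\liminf_{n\to\infty} s_n\, d(T^n x,y),\qquad \psi(x,y)=\liminf_{n\to\infty} s_n\, d(T^n x,T^n y),\qquad x,y\in X.\] Then both $\phi$ and $\psi$ take values in $\{0,\infty\}$ for $\mu\times\nu$-almost every $(x,y)\in X\times X$. In particular, for every $\alpha>0$ this holds for the gauges $\phi_\alpha(x,y)=\liminf_{n} n^\alpha d(T^nx,y)$ and $\psi_\alpha(x,y)=\liminf_n n^\alpha d(T^nx,T^ny)$.
   Context: A scale sequence is a sequence $(s_n)_{n\ge1}$ of positive reals with $s_n\to\infty$. It is two-jumpy if $s_{n+1}\ge s_n$ for all sufficiently large $n$ and $\liminf_{n\to\infty} s_{2n}/s_n>1$. A measure $\mu$ is $T$-invariant if $\mu(T^{-1}B)=\mu(B)$ for all Borel sets $B$. *)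

From HB Require Import structures.
From mathcomp Require Import all_boot all_order all_algebra.
From mathcomp Require Import all_classical all_reals all_analysis.
Set Implicit Arguments. Unset Strict Implicit. Unset Printing Implicit Defensive.
Import Order.TTheory GRing.Theory Num.Theory.
Local Open Scope classical_set_scope.
Local Open Scope ring_scope.

Definition is_metric (R : realType) (X : Type) (dist : X -> X -> R) : Prop :=
  [/\ (forall x y, 0 <= dist x y),
      (forall x y, dist x y = 0 <-> x = y),
      (forall x y, dist x y = dist y x) &
      (forall x y z, dist x z <= dist x y + dist y z)].

Definition metric_open (R : realType) (X : Type) (dist : X -> X -> R)
  (U : set X) : Prop :=
  forall x, U x -> exists2 r : R, 0 < r & [set y | dist x y < r] `<=` U.

Definition metric_separable (R : realType) (X : Type) (dist : X -> X -> R)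
  : Prop :=
  exists D : set X, countable D /\
    forall x (e : R), 0 < e -> exists2 y, D y & dist x y < e.

Definition borel_of_metric (R : realType) (d : measure_display)
  (X : measurableType d) (dist : X -> X -> R) : Prop :=
  forall A : set X, measurable A <-> <<s metric_open dist >> A.

(* scale sequence (indices n >= 1; the value at n = 0 is irrelevant) *)
Definition scale_sequence (R : realType) (s : nat -> R) : Prop :=
  (forall n, (0 < n)%N -> 0 < s n) /\ s @ \oo --> +oo.

Definition two_jumpy (R : realType) (s : nat -> R) : Prop :=
  (\forall n \near \oo, s n <= s n.+1) /\
  (1 < limn_einf (fun n => (s (2 * n)%N / s n)%:E))%E.

Definition T_invariant (R : realType) (d : measure_display)
  (X : measurableType d) (T : X -> X) (mu : set X -> \bar R) : Prop :=
  forall B : set X, measurable B -> mu (T @^-1` B) = mu B.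

Definition phi_gauge (R : realType) (X : Type) (dist : X -> X -> R)
  (T : X -> X) (s : nat -> R) (x y : X) : \bar R :=
  limn_einf (fun n => (s n * dist (iter n T x) y)%:E).

Definition psi_gauge (R : realType) (X : Type) (dist : X -> X -> R)
  (T : X -> X) (s : nat -> R) (x y : X) : \bar R :=
  limn_einf (fun n => (s n * dist (iter n T x) (iter n T y))%:E).

Definition zero_or_infty (R : realType) (v : \bar R) : Prop :=
  v = 0%E \/ v = +oo%E.

From HB Require Import structures.
From mathcomp Require Import all_boot all_order all_algebra.
From mathcomp Require Import all_classical all_reals all_analysis.
From mathcomp Require Import measurable_realfun lra zify.
Import Order.TTheory GRing.Theory Num.Theory.
Local Open Scope classical_set_scope.
Local Open Scope ring_scope.

(* Both gauges are liminfs of [s_n Z (S^n w)], where [Z (x, y) = d(x, y)] and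
   [S] is the measure-preserving map [T x id] (for phi) or [T x T] (for psi)
   of [(X * X, mu \x nu)].  Suppose such a liminf is some [c] in [(0, +oo)],
   and pick a rational [a] with [c / lam < a < c], where [s_(2n) >= lam s_n]
   eventually.  Then [s_m Z (S^m w) >= a] for all large [m], so the orbit of
   [w] stays in the essentially invariant set [D] of such points, while
   [s_j Z (S^j w) < lam a] for infinitely many [j].  For such [j], doubling and
   monotonicity of [s] show that each [S^k w] with [j - j/2 <= k < j - M] lies
   in [D] but fails [s_m Z (S^m .) >= a] at some [m > M].  The orbit thus
   spends a quarter of arbitrarily long initial segments in the set
   [late_ge M] of such points, and a maximal inequality bounds the measure of
   such [w] by [4 P (late_ge M)], which tends to 0 as [M] grows. *)

Section limn_einf_eventually.
Context {R : realType}.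
Local Open Scope ereal_scope.
Implicit Types (u : (\bar R)^nat) (x : \bar R).

Lemma limn_einfE u : limn_einf u = ereal_sup (range (einfs u)).
Proof.
by rewrite limn_einf_lim; apply: cvg_lim => //; exact: cvg_einfs_sup.
Qed.

Lemma lt_limn_einf_ev u x : x < limn_einf u ->
  exists N, forall m, (N <= m)%N -> x < u m.
Proof.
rewrite limn_einfE => /ereal_sup_gt [_ [n _ <-]] xn; exists n => m nm.
by apply: (lt_le_trans xn); apply: ereal_inf_lbound; exists m.
Qed.

Lemma limn_einf_lt_often u x : limn_einf u < x ->
  forall N, exists2 m, (N <= m)%N & u m < x.
Proof.
rewrite limn_einfE => ux N.
have : einfs u N < x.
  by apply: le_lt_trans ux; apply: ereal_sup_ubound; exists N.
by move=> /ereal_inf_lt [_ [m Nm <-]] umx; exists m.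
Qed.

Lemma le_limn_einf_ev u x N : (forall m, (N <= m)%N -> x <= u m) ->
  x <= limn_einf u.
Proof.
move=> xu; rewrite limn_einfE; apply: (@le_trans _ _ (einfs u N)).
  by apply/ereal_infP => _ [m Nm <-]; exact: xu.
by apply: ereal_sup_ubound; exists N.
Qed.

End limn_einf_eventually.

Lemma nat_ratio_between {R : realType} (c lam : R) : 0 < c -> 1 < lam ->
  exists p q : nat, c / lam < p.+1%:R / q.+1%:R < c.
Proof.
move=> c0 lam1; have lam0 : 0 < lam := lt_trans ltr01 lam1.
have gap : 0 < c - c / lam.
  by rewrite subr_gt0 ltr_pdivrMr // -{1}(mulr1 c) ltr_pM2l.
have [q qgap] : exists q : nat, (c - c / lam)^-1 < q.+1%:R.
  by exists (Num.truncn (c - c / lam)^-1); exact: truncnS_gt.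
have x0 : 0 <= q.+1%:R * (c / lam) by rewrite mulr_ge0 // divr_ge0 // ltW.
have /andP[px xp] := truncn_itv x0.
set p := Num.truncn _ in px xp; exists p, q; apply/andP; split.
  by rewrite ltr_pdivlMr // mulrC.
have q1 : 1 < q.+1%:R * (c - c / lam) by rewrite -ltr_pdivrMr // mul1r.
have p1 : p.+1%:R <= q.+1%:R * (c / lam) + 1 by rewrite -natr1 lerD2r.
rewrite ltr_pdivrMr // (mulrC c); rewrite mulrBr in q1; lra.
Qed.

Lemma two_jumpy_doubling {R : realType} (s : nat -> R) :
  scale_sequence s -> two_jumpy s ->
  exists lam N0, 1 < lam /\ forall n, (N0 <= n)%N ->
    [/\ 0 < s n, s n <= s n.+1 & lam * s n <= s (2 * n)].
Proof.
move=> [s0 _] [[N1 _ sN1] jump].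
have [lam [lam1 lamj]] : exists lam : R, 1 < lam /\
    (lam%:E < limn_einf (fun n => (s (2 * n)%N / s n)%:E))%E.
  move: jump; case: (limn_einf _) => [r||] //.
  - by rewrite lte_fin => r1; exists ((1 + r) / 2); rewrite lte_fin; lra.
  - by move=> _; exists 2; split; [lra|exact: ltry].
have [N2 sN2] := lt_limn_einf_ev _ _ lamj.
exists lam, (maxn (maxn N1 N2) 1); split => // n n_ge.
have sn0 : 0 < s n by apply: s0; lia.
split => //; first by apply: sN1 => /=; lia.
by have := sN2 n ltac:(lia); rewrite lte_fin ltr_pdivlMr // => /ltW.
Qed.

Lemma le_of_forall_mulrn_le {R : realType} (g e : R) (L : nat) : 0 <= e ->
  (forall H : nat, g *+ H <= e *+ (H + L)) -> g <= e.
Proof.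
move=> e0 geL; rewrite leNgt; apply/negP => eg.
have gap : 0 < g - e by rewrite subr_gt0.
have [H HeL] : exists H : nat, e * L%:R / (g - e) < H%:R.
  by exists (Num.truncn (e * L%:R / (g - e))).+1; exact: truncnS_gt.
have := geL H; rewrite -[g *+ _]mulr_natr -[e *+ _]mulr_natr natrD.
move: HeL; rewrite ltr_pdivrMr // mulrBr; lra.
Qed.

Section window_cover.
Context {R : realType}.
Implicit Types (x y : nat -> R).

Lemma sumr_le_length y a b : (forall i, y i <= 1) ->
  \sum_(a <= i < b) y i <= (b - a)%:R.
Proof.
move=> y1; apply: (@le_trans _ _ (\sum_(a <= i < b) (1 : R))).
  by apply: ler_sum => i _.
by rewrite sumr_const_nat.
Qed.

(* Greedy covering: skip each i with y i = 0, otherwise pay for the window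
   that starts at i and continue after it. *)
Lemma sum_le_window_cover x y (c : R) (L : nat) :
  0 <= c -> (forall i, 0 <= x i) -> (forall i, y i <= 1) ->
  (forall i, y i != 0 -> exists2 n, (0 < n <= L)%N &
     n%:R <= c * \sum_(i <= k < i + n) x k) ->
  forall H i0,
    \sum_(i0 <= i < i0 + H) y i <= c * \sum_(i0 <= k < i0 + H + L) x k.
Proof.
move=> c0 x0 y1 cover; elim/ltn_ind => -[|H] IH i0.
  by rewrite addn0 big_geq // mulr_ge0 // sumr_ge0.
have sum_x_widen a b b' : (a <= b <= b')%N ->
    \sum_(a <= k < b) x k <= \sum_(a <= k < b') x k.
  move=> /andP[ab bb']; rewrite (big_cat_nat ab bb') /= lerDl.
  by apply: sumr_ge0 => k _.
have [yi0|/cover [n /andP[n0 nL] yn]] := eqVneq (y i0) 0.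
  rewrite big_ltn ?yi0 ?add0r; last by lia.
  rewrite -!addSnnS; apply: le_trans (IH H (ltnSn H) i0.+1) _.
  rewrite ler_wpM2l // (big_ltn (m := i0)); last by lia.
  by rewrite lerDr x0.
have [Hn|nH] := leqP H.+1 n.
  apply: le_trans (sumr_le_length _ _ _ y1) _.
  apply: (@le_trans _ _ n%:R); first by rewrite ler_nat; lia.
  by apply: le_trans yn _; rewrite ler_wpM2l //; apply: sum_x_widen; lia.
rewrite (big_cat_nat (n := i0 + n)) /=; try lia.
rewrite (big_cat_nat (n := i0 + n) (m := i0) (p := i0 + H.+1 + L)) /=; try lia.
rewrite mulrDr; apply: lerD.
  by apply: le_trans (sumr_le_length _ _ _ y1) _; rewrite addKn.
have := IH (H.+1 - n)%N ltac:(lia) (i0 + n).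
by rewrite (_ : (i0 + n + (H.+1 - n))%N = (i0 + H.+1)%N); [|lia].
Qed.

End window_cover.

Section indicator.
Context {U : Type} {R : realType}.
Implicit Types (A : set U) (w : U).

Lemma indic_ge0 A w : 0 <= \1_A w :> R.
Proof. by rewrite indicE; case: (_ \in _). Qed.

Lemma indic_le1 A w : \1_A w <= 1 :> R.
Proof. by rewrite indicE; case: (_ \in _). Qed.

Lemma indic_neq0_mem A w : \1_A w != 0 :> R -> A w.
Proof.
by rewrite indicE; case: (boolP (w \in A)) => [/set_mem|] //; rewrite eqxx.
Qed.

End indicator.

Lemma measurableT_preimage d1 d2 (T1 : measurableType d1)
  (T2 : measurableType d2) (f : T1 -> T2) (A : set T2) :
  measurable_fun setT f -> measurable A -> measurable (f @^-1` A).
Proof. by move=> mf mA; rewrite -[_ @^-1` _]setTI; exact: mf. Qed.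
Arguments measurableT_preimage {d1 d2 T1 T2 f A}.

Section measure_preserving.
Context d (T : measurableType d) (R : realType) (P : probability T R)
  (S : T -> T).
Hypothesis mS : measurable_fun setT S.
Hypothesis PS : T_invariant S P.

Lemma measurable_iter k : measurable_fun setT (iter k S).
Proof.
elim: k => [|k IH] /=; first exact: measurable_id.
exact: (measurableT_comp mS IH).
Qed.

Lemma measure_preimage_iter k A : measurable A -> P (iter k S @^-1` A) = P A.
Proof.
elim: k A => [//|k IH] A mA.
rewrite (_ : iter k.+1 S @^-1` A = iter k S @^-1` (S @^-1` A)) //.
by rewrite IH ?PS //; exact: measurableT_preimage.
Qed.

Definition visits (E : set T) n w : R := \sum_(0 <= k < n) \1_E (iter k S w).

Definition frequent_visitors (E : set T) L :=
  [set w | exists2 n, (0 < n <= L)%N & n%:R <= 4 * visits E n w].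

Lemma measurable_visits E n : measurable E -> measurable_fun setT (visits E n).
Proof.
move=> mE; apply: measurable_sum => k.
by apply: measurableT_comp; [exact: measurable_indic|exact: measurable_iter].
Qed.

Lemma measurable_frequent_visitors E L :
  measurable E -> measurable (frequent_visitors E L).
Proof.
move=> mE; rewrite (_ : frequent_visitors E L = \bigcup_n
    if (0 < n <= L)%N then (fun w => 4 * visits E n w) @^-1` `[n%:R, +oo[
    else set0).
  apply: bigcupT_measurable => n; case: ifP => _ //.
  apply: measurableT_preimage => //; apply: measurable_funM => //.
  exact: measurable_visits.
apply/seteqP; split => w /=.
  by move=> [n nL visE]; exists n => //; rewrite nL /= in_itv /= visE.
move=> [n _]; case: ifP => // nL /=; rewrite in_itv /= andbT.
by exists n.
Qed.

Lemma visits_frequent_visitors_le E L H w :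
  visits (frequent_visitors E L) H w <= 4 * visits E (H + L) w.
Proof.
have := @sum_le_window_cover _ (fun k => \1_E (iter k S w))
  (fun i => \1_(frequent_visitors E L) (iter i S w)) 4 L ltac:(lra)
  (fun _ => indic_ge0 _ _) (fun _ => indic_le1 _ _) _ H 0.
rewrite !add0n; apply => i /(indic_neq0_mem _ _) [n nL visE]; exists n => //.
apply: le_trans visE _.
rewrite /visits -{2}(add0n i) big_addn addKn ler_wpM2l //.
by apply: ler_sum => k _; rewrite iterD.
Qed.

Lemma integral_visits E n : measurable E ->
  (\int[P]_w (visits E n w)%:E = P E *+ n)%E.
Proof.
move=> mE; under eq_integral do rewrite /visits -sumEFin.
rewrite ge0_integral_sum //; last first.
  move=> k; apply/measurable_EFinP; apply: measurableT_comp.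
    exact: measurable_indic.
  exact: measurable_iter.
rewrite (eq_bigr (fun _ => P E)) ?sumr_const_nat ?subn0 // => k _.
rewrite -(measure_preimage_iter k _ mE) -[X in _ = P X]setIT -integral_indic //.
exact: measurableT_preimage (measurable_iter k) mE.
Qed.

Lemma measure_frequent_visitors_le E L : measurable E ->
  (P (frequent_visitors E L) <= 4%:E * P E)%E.
Proof.
move=> mE; set G := frequent_visitors E L.
have mG : measurable G by exact: measurable_frequent_visitors.
have mvisits A n : measurable A ->
    measurable_fun setT (fun w => (visits A n w)%:E : \bar R).
  by move=> mA; apply/measurable_EFinP; exact: measurable_visits.
have visits_ge0 A n w : 0 <= visits A n w.
  by apply: sumr_ge0 => k _; exact: indic_ge0.
have sumle H : (P G *+ H <= 4%:E * (P E *+ (H + L)))%E.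
  rewrite -!integral_visits // -ge0_integralZl_EFin //;
    [|by move=> w _; rewrite lee_fin|exact: mvisits].
  apply: ge0_le_integral => //.
  - by move=> w _; rewrite lee_fin.
  - exact: mvisits.
  - apply/measurable_EFinP; apply: measurable_funM => //.
    exact: measurable_visits.
  - by move=> w _; rewrite lee_fin; exact: visits_frequent_visitors_le.
move: sumle; rewrite -(fineK (fin_num_measure _ _ mG)).
rewrite -(fineK (fin_num_measure _ _ mE)) -EFinM lee_fin => sumle.
apply: (@le_of_forall_mulrn_le _ _ _ L).
  by rewrite mulr_ge0 // fine_ge0 // measure_ge0.
by move=> H; have := sumle H; rewrite -!EFin_natmul -EFinM lee_fin mulrnAr.
Qed.

Lemma measure_bigcup_frequent_visitors_le E : measurable E ->
  (P (\bigcup_L frequent_visitors E L) <= 4%:E * P E)%E.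
Proof.
move=> mE; have mF L := measurable_frequent_visitors E L mE.
have ndF : nondecreasing_seq (frequent_visitors E).
  move=> m n mn; apply/subsetPset => w [k km visE]; exists k => //; lia.
have cvgF := @nondecreasing_cvg_mu _ _ _ P _ mF (bigcupT_measurable _ mF) ndF.
rewrite -(cvg_lim _ cvgF) //; apply: lime_le.
  by apply/cvg_ex; eexists; exact: cvgF.
by apply: nearW => L; exact: measure_frequent_visitors_le.
Qed.

(* Invariance and [S^-1 D <= D] give [P (D `\` S^-1 D) = 0], and an orbit
   leaving [D] has to pass through that set. *)
Lemma subinvariant_orbit_ae (D : set T) : measurable D -> S @^-1` D `<=` D ->
  P.-negligible [set w | D w /\ exists k, ~ D (iter k S w)].
Proof.
move=> mD SD; set E := D `\` S @^-1` D.
have mE : measurable E by apply: measurableD => //; exact: measurableT_preimage.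
have PE0 : P E = 0%E.
  have PDfin : (P D < +oo)%E.
    by rewrite (le_lt_trans (probability_le1 _ mD)) // ltry.
  rewrite measureD ?setIidr //; last exact: measurableT_preimage.
  transitivity (P D - P D)%E; first by congr (_ - _)%E; exact: PS.
  by rewrite subee // fin_num_measure.
have : P.-negligible (\bigcup_i (iter i S @^-1` E)).
  apply: negligible_bigcup => i; apply/negligibleP.
    exact: measurableT_preimage (measurable_iter i) mE.
  exact: etrans (measure_preimage_iter i _ mE) PE0.
apply: negligibleS => w [Dw [k notD]]; apply: contrapT => notN; apply: notD.
elim: k => [//|k IH]; apply: contrapT => notD; apply: notN.
by exists k => //; rewrite /E /= iterSr -iterS.
Qed.

Section scaled_orbit.
Variables (Z : T -> R) (s : nat -> R) (lam a : R) (N0 : nat).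
Hypothesis mZ : measurable_fun setT Z.
Hypothesis Z0 : forall w, 0 <= Z w.
Hypothesis lam1 : 1 < lam.
Hypothesis s_regular : forall n, (N0 <= n)%N ->
  [/\ 0 < s n, s n <= s n.+1 & lam * s n <= s (2 * n)].

Definition scaled n w := s n * Z (iter n S w).

Definition ge_after M := [set w | forall m, (M < m)%N -> a <= scaled m w].

Definition eventually_ge := \bigcup_M ge_after M.

Definition often_lt :=
  [set w | forall N, exists2 j, (N <= j)%N & scaled j w < lam * a].

Definition late_ge M := eventually_ge `\` ge_after M.

Lemma measurable_scaled n : measurable_fun setT (scaled n).
Proof.
apply: measurable_funM => //; apply: measurableT_comp => //.
exact: measurable_iter.
Qed.

Lemma measurable_ge_after M : measurable (ge_after M).
Proof.
rewrite (_ : ge_after M = \bigcap_m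
    if (M < m)%N then scaled m @^-1` `[a, +oo[ else setT).
  apply: bigcapT_measurable => m; case: ifP => _ //.
  exact: measurableT_preimage (measurable_scaled m) _.
apply/seteqP; split => w /=.
  by move=> aw m _; case: ifP => // Mm /=; rewrite in_itv /= andbT; exact: aw.
by move=> aw m Mm; have := aw m I; rewrite Mm /= in_itv /= andbT.
Qed.

Lemma measurable_eventually_ge : measurable eventually_ge.
Proof. exact: bigcupT_measurable measurable_ge_after. Qed.

Lemma measurable_often_lt : measurable often_lt.
Proof.
rewrite (_ : often_lt = \bigcap_N \bigcup_j
    if (N <= j)%N then scaled j @^-1` `]-oo, lam * a[ else set0).
  apply: bigcapT_measurable => N; apply: bigcupT_measurable => j.
  case: ifP => _ //; exact: measurableT_preimage (measurable_scaled j) _.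
apply/seteqP; split => w /=.
  by move=> ltw N _; have [j Nj lt] := ltw N; exists j; rewrite ?Nj /= ?in_itv.
move=> ltw N; have [j _] := ltw N I; case: ifP => // Nj /=.
by rewrite in_itv /= => lt; exists j.
Qed.

Lemma measurable_late_ge M : measurable (late_ge M).
Proof. exact: measurableD measurable_eventually_ge (measurable_ge_after M). Qed.

Lemma s_le p q : (N0 <= p <= q)%N -> s p <= s q.
Proof.
move=> /andP[N0p]; elim: q => [|q IH] pq; first by have -> : p = 0%N by lia.
have [pq'|qp] := leqP p q; last by have -> : p = q.+1 by lia.
by apply: le_trans (IH pq') _; have [] := s_regular q ltac:(lia).
Qed.

Lemma preimage_eventually_ge : S @^-1` eventually_ge `<=` eventually_ge.
Proof.
move=> w [M _ aw]; exists (maxn M N0).+1 => // m Mm.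
have m_pred : m = m.-1.+1 by lia.
have [_ s_mono _] := s_regular m.-1 ltac:(lia); rewrite -m_pred in s_mono.
have := aw m.-1 ltac:(lia); rewrite /scaled -iterSr -m_pred => /le_trans.
by apply; exact: ler_wpM2r.
Qed.

Lemma measure_late_ge_cvg0 : P \o late_ge @ \oo --> 0%E.
Proof.
have -> : 0%E = P (\bigcap_M late_ge M).
  rewrite (_ : \bigcap_M late_ge M = set0) ?measure0 //.
  apply/seteqP; split => w // lw; have [[M _ aw] _] := lw 0%N I.
  by have [_] := lw M I; apply.
apply: nonincreasing_cvg_mu.
- by rewrite (le_lt_trans (probability_le1 _ (measurable_late_ge 0))) // ltry.
- exact: measurable_late_ge.
- exact: bigcapT_measurable measurable_late_ge.
- move=> m n mn; apply/subsetPset => w [Dw notA]; split => // aw; apply: notA.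
  by move=> k mk; apply: aw; lia.
Qed.

(* If [scaled j w < lam a], doubling and monotonicity of [s] give
   [scaled (j - k) (S^k w) <= scaled j w / lam < a]
   for [j - k] in [(M, j/2]]. *)
Lemma late_ge_window w M j k :
  (forall i, eventually_ge (iter i S w)) -> (N0 <= M)%N ->
  scaled j w < lam * a -> (j - j %/ 2 <= k < j - M)%N -> (2 * N0 <= j)%N ->
  late_ge M (iter k S w).
Proof.
move=> orbitD N0M ltj /andP[k1 k2] N0j; split; first exact: orbitD.
move=> /(_ (j - k)%N ltac:(lia)); rewrite /scaled -iterD subnK; last by lia.
have lam0 : 0 < lam := lt_trans ltr01 lam1.
have s_jk : lam * s (j - k) <= s j.
  apply: le_trans (_ : lam * s (j %/ 2) <= s j).
    by rewrite ler_pM2l //; apply: s_le; lia.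
  have [_ _ dbl] := s_regular (j %/ 2) ltac:(lia).
  by apply: le_trans dbl _; apply: s_le; lia.
have := Z0 (iter j S w); move: ltj; rewrite /scaled => ltj Zj0 ajk.
have : lam * a <= lam * (s (j - k) * Z (iter j S w)) by rewrite ler_pM2l.
have : lam * (s (j - k) * Z (iter j S w)) <= s j * Z (iter j S w).
  by rewrite mulrA ler_wpM2r.
lra.
Qed.

Lemma often_lt_frequent_visitors w M : (N0 <= M)%N ->
  (forall i, eventually_ge (iter i S w)) -> often_lt w ->
  (\bigcup_L frequent_visitors (late_ge M) L) w.
Proof.
move=> N0M orbitD ltw.
have [j jN ltj] := ltw (4 * M + 4 + 2 * N0)%N.
exists j => //; exists j; first by apply/andP; split; lia.
have count : (j %/ 2 - M)%:R <= visits (late_ge M) j w.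
  rewrite /visits (big_cat_nat (n := j - j %/ 2)) /=; try lia.
  rewrite (big_cat_nat (m := j - j %/ 2) (n := j - M) (p := j)) /=; try lia.
  rewrite addrC -addrA ler_wpDr //.
    by rewrite addr_ge0 // sumr_ge0 // => k _; exact: indic_ge0.
  apply: (@le_trans _ _ (\sum_(j - j %/ 2 <= k < j - M) (1 : R))).
    rewrite sumr_const_nat.
    by rewrite (_ : (j - M - (j - j %/ 2))%N = (j %/ 2 - M)%N) //; lia.
  apply: ler_sum_nat => k kj; rewrite indicE mem_set //.
  by apply: (late_ge_window _ _ _ _ orbitD N0M ltj kj); lia.
apply: (@le_trans _ _ (4 * (j %/ 2 - M)%:R)).
  by rewrite -natrM ler_nat; lia.
by rewrite ler_pM2l.
Qed.

Lemma measure_often_lt_eventually_ge : P (often_lt `&` eventually_ge) = 0%E.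
Proof.
set C := often_lt `&` eventually_ge.
have mC : measurable C :=
  measurableI _ _ measurable_often_lt measurable_eventually_ge.
have [N [mN PN0 escape]] := subinvariant_orbit_ae _ measurable_eventually_ge
  preimage_eventually_ge.
have bound M : (N0 <= M)%N -> ((4^-1)%:E * P C <= P (late_ge M))%E.
  move=> N0M; set F := \bigcup_L frequent_visitors (late_ge M) L.
  have mF : measurable F.
    apply: bigcupT_measurable => L.
    exact: measurable_frequent_visitors (measurable_late_ge M).
  have CNF : C `<=` N `|` F.
    move=> w [ltw Dw]; have [Nw|notN] := pselect (N w); [by left|right].
    apply: often_lt_frequent_visitors => // i.
    apply: contrapT => notD; apply: notN.
    by apply: escape; split => //; exists i.
  have PCF : (P C <= 4%:E * P (late_ge M))%E.
    apply: le_trans _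
      (measure_bigcup_frequent_visitors_le _ (measurable_late_ge M)).
    apply: le_trans (le_measure _ (mem_set mC)
      (mem_set (measurableU _ _ mN mF)) CNF) _.
    apply: le_trans (measureU2 _ mN mF) _.
    by rewrite [X in (X + _)%E](_ : _ = 0%E) ?add0e.
  move: PCF; rewrite -(fineK (fin_num_measure _ _ mC)).
  rewrite -(fineK (fin_num_measure _ _ (measurable_late_ge M))).
  by rewrite -!EFinM !lee_fin; lra.
have : ((4^-1)%:E * P C <= 0)%E.
  rewrite -(cvg_lim _ measure_late_ge_cvg0) //; apply: lime_ge.
    by apply/cvg_ex; exists 0%E; exact: measure_late_ge_cvg0.
  by exists N0 => // M; exact: bound.
rewrite -(fineK (fin_num_measure _ _ mC)) -EFinM lee_fin pmulr_rle0 // => PC0.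
by apply/eqP; rewrite eq_le !lee_fin PC0 fine_ge0 // measure_ge0.
Qed.

End scaled_orbit.

Lemma often_lt_eventually_ge_of_liminf (Z : T -> R) (s : nat -> R) lam a w c :
  limn_einf (fun n => (scaled Z s n w)%:E) = c%:E -> c < lam * a -> a < c ->
  (often_lt Z s lam a `&` eventually_ge Z s a) w.
Proof.
move=> Lc clam ac; split.
  move=> N; have : (limn_einf (fun n => (scaled Z s n w)%:E) < (lam * a)%:E)%E.
    by rewrite Lc lte_fin.
  by move=> /limn_einf_lt_often /(_ N) [j Nj]; rewrite lte_fin; exists j.
have : (a%:E < limn_einf (fun n => (scaled Z s n w)%:E))%E.
  by rewrite Lc lte_fin.
move=> /lt_limn_einf_ev [M aM]; exists M => // m Mm.
by have := aM m (ltnW Mm); rewrite lte_fin => /ltW.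
Qed.

(* A finite positive liminf [c] puts [w] in one of countably many sets
   [often_lt `&` eventually_ge], with a rational [a] in [(c / lam, c)]. *)
Lemma liminf_scaled_zero_or_infty_ae (Z : T -> R) (s : nat -> R) :
  measurable_fun setT Z -> (forall w, 0 <= Z w) ->
  scale_sequence s -> two_jumpy s ->
  P.-negligible
    [set w | ~ zero_or_infty (limn_einf (fun n => (scaled Z s n w)%:E))].
Proof.
move=> mZ Z0 s_scale s_jumpy.
have [lam [N0 [lam1 s_regular]]] := two_jumpy_doubling _ s_scale s_jumpy.
pose a p q : R := p.+1%:R / q.+1%:R.
apply: (@negligibleS _ _ _ _ (\bigcup_q \bigcup_p
    (often_lt Z s lam (a p q) `&` eventually_ge Z s (a p q)))); last first.
  apply: negligible_bigcup => q; apply: negligible_bigcup => p.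
  apply/negligibleP.
    by apply: measurableI; [exact: measurable_often_lt|
                            exact: measurable_eventually_ge].
  exact: measure_often_lt_eventually_ge _ _ _ _ _ mZ Z0 lam1 s_regular.
move=> w /=; have : (0 <= limn_einf (fun n => (scaled Z s n w)%:E))%E.
  apply: (le_limn_einf_ev _ _ N0) => m m_ge.
  by rewrite lee_fin mulr_ge0 //; have [/ltW] := s_regular m m_ge.
case Lc : (limn_einf _) => [c||] // L0 not01; last first.
  by exfalso; apply: not01; right.
have c0 : 0 < c.
  rewrite lt_neqAle -lee_fin L0 andbT; apply/eqP => c0.
  by apply: not01; left; rewrite -c0.
have [p [q /andP[ca ac]]] := nat_ratio_between _ _ c0 lam1.
exists q => //; exists p => //; apply: often_lt_eventually_ge_of_liminf Lc _ ac.
by rewrite mulrC -ltr_pdivrMr // (lt_trans ltr01 lam1).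
Qed.

End measure_preserving.

Lemma powR_scale_two_jumpy {R : realType} (alpha : R) : 0 < alpha ->
  scale_sequence (fun n : nat => n%:R `^ alpha) /\
  two_jumpy (fun n : nat => n%:R `^ alpha).
Proof.
move=> alpha0; split; first split.
- by move=> n n0; rewrite powR_gt0 // ltr0n.
- apply/cvgryPger => A _.
  exists (Num.truncn (`|A| `^ alpha^-1)).+1 => // n /= An.
  have An' : `|A| `^ alpha^-1 < n%:R.
    by apply: lt_le_trans (truncnS_gt _) _; rewrite ler_nat.
  apply: le_trans (ler_norm A) _.
  have -> : `|A| = (`|A| `^ alpha^-1) `^ alpha.
    by rewrite -powRrM mulVf ?gt_eqF // powRr1.
  apply: ge0_ler_powR;
    by rewrite ?nnegrE ?powR_ge0 ?ler0n ?(ltW An') ?(ltW alpha0).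
split.
- exists 0%N => // n _ /=; apply: ge0_ler_powR;
    by rewrite ?nnegrE ?ler0n ?ler_nat ?(ltW alpha0).
- apply: (@lt_le_trans _ _ (2 `^ alpha)%:E).
    rewrite lte_fin; apply: (@le_lt_trans _ _ (1 `^ alpha)).
      by rewrite powR1.
    by apply: gt0_ltr_powR; rewrite ?nnegrE ?ler01 ?ler0n ?ltr1n.
  apply: (le_limn_einf_ev _ _ 1%N) => m m1.
  by rewrite natrM powRM // mulfK // gt_eqF // powR_gt0 // ltr0n.
Qed.

Lemma iter_pair_map (A B : Type) (f : A -> A) (g : B -> B) n (p : A * B) :
  iter n (fun q => (f q.1, g q.2)) p = (iter n f p.1, iter n g p.2).
Proof. by case: p => x y; elim: n => [|n IH] //=; rewrite IH. Qed.

Lemma product_map_invariant d1 d2 (X1 : measurableType d1)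
  (X2 : measurableType d2) (R : realType) (mu : probability X1 R)
  (nu : probability X2 R) (f : X1 -> X1) (g : X2 -> X2) :
  measurable_fun setT f -> measurable_fun setT g ->
  T_invariant f mu -> T_invariant g nu ->
  T_invariant (fun p => (f p.1, g p.2)) (mu \x nu)%E.
Proof.
move=> mf mg fmu gnu A mA.
have mfg : measurable_fun setT (fun p : X1 * X2 => (f p.1, g p.2)).
  by apply: measurable_fun_pair; apply: measurableT_comp.
unshelve epose proof (@product_measure_unique _ _ X1 X2 R mu nu
  (pushforward (mu \x nu)%E (fun p => (f p.1, g p.2))) _ A mA) as pushE.
- exact: mfg.
- move=> B C mB mC; rewrite /pushforward /=.
  change ((mu \x nu)%E ((f @^-1` B) `*` (g @^-1` C)) = (mu B * nu C)%E).
  rewrite product_measure1E; try exact: measurableT_preimage.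
  by congr (_ * _)%E; [exact: fmu|exact: gnu].
- by rewrite pushE.
Qed.

Lemma countable_bigcup_measurable d (T : sigmaRingType d) (I : Type)
  (D : set I) (F : I -> set T) :
  countable D -> (forall i, D i -> measurable (F i)) ->
  measurable (\bigcup_(i in D) F i).
Proof.
move=> /countable_injP[f finj] mF.
pose G n := if pselect (exists2 i, D i & f i = n) is left h
  then F (s2val (cid2 h)) else set0.
rewrite (_ : \bigcup_(i in D) F i = \bigcup_n G n).
  apply: bigcupT_measurable => n; rewrite /G; case: pselect => // h.
  by case: (cid2 h) => i Di _ /=; exact: mF.
apply/seteqP; split => x.
  move=> [i Di Fx]; exists (f i) => //; rewrite /G.
  case: pselect => [h|]; last by move=> nh; exfalso; apply: nh; exists i.
  case: (cid2 h) => j Dj fji /=.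
  by rewrite (finj j i) ?inE.
move=> [n _]; rewrite /G; case: pselect => // h.
by case: (cid2 h) => i Di _ /= Fx; exists i.
Qed.

Section separable_metric.
Context (R : realType) d (X : measurableType d) (dist : X -> X -> R).
Hypothesis dist_metric : is_metric dist.
Hypothesis dist_borel : borel_of_metric dist.

Lemma measurable_ball q r : measurable [set y | dist q y < r].
Proof.
apply/dist_borel; apply: sub_sigma_algebra => y qy.
have [_ _ _ tri] := dist_metric.
exists (r - dist q y); first by rewrite subr_gt0.
by move=> z /= yz; have := tri q y z; lra.
Qed.

Lemma dist_lt_bigcup (D : set X) r :
  (forall x e, 0 < e -> exists2 y, D y & dist x y < e) ->
  [set p : X * X | dist p.1 p.2 < r] = \bigcup_m \bigcup_(q in D)
    ([set y | dist q y < m.+1%:R^-1] `*` [set y | dist q y < r - m.+1%:R^-1]).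
Proof.
move=> Ddense; have [_ _ sym tri] := dist_metric.
(* [lra] does not accept [m.+1%:R^-1], hence the generalizations below. *)
apply/seteqP; split => -[x y] /=; last first.
  move=> [m _ [q _ [/=]]]; move: (m.+1%:R^-1) => e qx qy.
  by have := tri x q y; rewrite (sym x q); lra.
move=> xy; have gap : 0 < r - dist x y by rewrite subr_gt0.
have [m m_gt] : exists m : nat, 2 / (r - dist x y) < m.+1%:R.
  by exists (Num.truncn (2 / (r - dist x y))); exact: truncnS_gt.
have e0 : 0 < m.+1%:R^-1 :> R by rewrite invr_gt0.
have [q Dq xq] := Ddense x _ e0.
exists m => //; exists q => //; split => /=; first by rewrite sym.
have : 2 * m.+1%:R^-1 < r - dist x y.
  by move: m_gt; rewrite ltr_pdivrMr // mulrC -ltr_pdivrMr.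
move: xq; move: (m.+1%:R^-1) => e xq.
by have := tri q x y; rewrite (sym q x); lra.
Qed.

Lemma measurable_dist : metric_separable dist ->
  measurable_fun setT (fun p : X * X => dist p.1 p.2).
Proof.
move=> [D [cD Ddense]].
apply: (measurability _ (RGenInftyO.measurableE R)) => _ [_ [r ->] <-].
rewrite setTI (_ : _ @^-1` _ = [set p | dist p.1 p.2 < r]); last first.
  by apply/seteqP; split => p /=; rewrite in_itv.
rewrite (dist_lt_bigcup _ _ Ddense); apply: bigcupT_measurable => m.
apply: countable_bigcup_measurable => // q _.
by apply: measurableX; exact: measurable_ball.
Qed.

End separable_metric.

Lemma gauges_zero_or_infty_ae (R : realType) d (X : measurableType d)
  (dist : X -> X -> R) (T : X -> X) (mu nu : probability X R) (s : nat -> R) :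
  is_metric dist -> metric_separable dist -> borel_of_metric dist ->
  measurable_fun setT T -> T_invariant T mu -> T_invariant T nu ->
  scale_sequence s -> two_jumpy s ->
  {ae (mu \x nu)%E, forall p : X * X,
     zero_or_infty (phi_gauge dist T s p.1 p.2) /\
     zero_or_infty (psi_gauge dist T s p.1 p.2)}.
Proof.
move=> dist_metric sep borel mT Tmu Tnu s_scale s_jumpy.
have mZ : measurable_fun setT (fun p : X * X => dist p.1 p.2).
  exact: measurable_dist.
have Z0 (p : X * X) : 0 <= dist p.1 p.2 by have [] := dist_metric.
have bad_ae (g : X -> X) : measurable_fun setT g -> T_invariant g nu ->
    (mu \x nu)%E.-negligible [set p | ~ zero_or_infty (limn_einf
      (fun n => (s n * dist (iter n T p.1) (iter n g p.2))%:E))].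
  move=> mg gnu; set S := fun q : X * X => (T q.1, g q.2).
  have mS : measurable_fun setT S.
    by apply: measurable_fun_pair; apply: measurableT_comp.
  have SP : T_invariant S (mu \x nu)%E by exact: product_map_invariant.
  apply: negligibleS (@liminf_scaled_zero_or_infty_ae _ _ _ (mu \x nu)%E S
    mS SP _ s mZ Z0 s_scale s_jumpy).
  move=> p /=; rewrite /scaled.
  suff -> : (fun n => (s n * dist (iter n S p).1 (iter n S p).2)%:E) =
    (fun n => (s n * dist (iter n T p.1) (iter n g p.2))%:E) by [].
  by apply/funext => n; rewrite iter_pair_map.
have phi_ae := bad_ae id (@measurable_id _ X setT) (fun B _ => erefl).
have psi_ae := bad_ae T mT Tnu.
apply: negligibleS (negligibleU phi_ae psi_ae) => p /= bad.
have [phi01|nphi] := pselect (zero_or_infty (phi_gauge dist T s p.1 p.2)).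
  by right => psi01; apply: bad.
left; suff -> : (fun n => (s n * dist (iter n T p.1) (iter n id p.2))%:E) =
  (fun n => (s n * dist (iter n T p.1) p.2)%:E) by [].
by apply/funext => n; rewrite [iter n id _]iter_fix.
Qed.

Theorem theorem3p2 (R : realType) (d : measure_display) (X : measurableType d)
  (dist : X -> X -> R) (T : X -> X)
  (mu nu : probability X R) :
  is_metric dist -> metric_separable dist -> borel_of_metric dist ->
  measurable_fun setT T -> T_invariant T mu -> T_invariant T nu ->
  (forall s : nat -> R, scale_sequence s -> two_jumpy s ->
     {ae (mu \x nu)%E, forall p : X * X,
        zero_or_infty (phi_gauge dist T s p.1 p.2) /\
        zero_or_infty (psi_gauge dist T s p.1 p.2)}) /\
  (forall alpha : R, 0 < alpha ->
     {ae (mu \x nu)%E, forall p : X * X,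
        zero_or_infty (phi_gauge dist T (fun n => n%:R `^ alpha) p.1 p.2) /\
        zero_or_infty (psi_gauge dist T (fun n => n%:R `^ alpha) p.1 p.2)}).
Proof.
move=> dist_metric sep borel mT Tmu Tnu; split => [s|alpha alpha0].
  exact: gauges_zero_or_infty_ae.
have [s_scale s_jumpy] := powR_scale_two_jumpy _ alpha0.
exact: gauges_zero_or_infty_ae.
Qed.
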